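(* Let $\mathcal{X}=\mathcal{X}^{(1)}\times\cdots\times\mathcal{X}^{(d)}$ with each $\mathcal{X}^{(j)}$ finite, $\pi$ a positive probability mass on $\mathcal{X}$, $\emptyset\ne S\subseteq\{1,\dots,d\}$, and $P$ a lazy, ergodic, $\pi$-reversible transition matrix on $\mathcal{X}$. Then $\gamma(P)\le\gamma(P^{(S)}\otimes P^{(-S)})$; in particular $t_{rel}(P)\ge t_{rel}(P^{(S)}\otimes P^{(-S)})$.
   Context: $P$ is lazy if $P(x,x)\ge1/2$ for all $x$. For $S\subseteq\{1,\dots,d\}$: $\pi^{(S)}(x^{(S)})=\sum_{x^{(-S)}}\pi(x)$ and $P^{(S)}(x^{(S)},y^{(S)}):=\frac{\sum_{x^{(-S)},y^{(-S)}}\pi(x)P(x,y)}{\pi^{(S)}(x^{(S)})}$; $P^{(-S)}:=P^{(\{1,\dots,d\}\setminus S)}$. $(P^{(S)}\otimes P^{(-S)})(x,y)=P^{(S)}(x^{(S)},y^{(S)})P^{(-S)}(x^{(-S)},y^{(-S)})$, with stationary distribution $\pi^{(S)}\otimes\pi^{(-S)}$. The right spectral gap of a chain $Q$ with stationary $\mu$ is $\gamma(Q)=\inf_{\mathrm{Var}_\mu f\ne0}\frac{\frac12\sum_{x,y}\mu(x)Q(x,y)(f(x)-f(y))^2}{\mathrm{Var}_\mu(f)}$, and $t_{rel}(Q)=1/\gamma(Q)$. *)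

From HB Require Import structures.
From mathcomp Require Import all_boot all_order all_algebra.
From mathcomp Require Import classical_sets reals.
Set Implicit Arguments. Unset Strict Implicit. Unset Printing Implicit Defensive.
Import Order.TTheory GRing.Theory Num.Theory.
Local Open Scope ring_scope.
Local Open Scope classical_set_scope.

Section Defs.
Variable R : realType.
Variable X : finType.

Fixpoint kpow (P : X -> X -> R) (n : nat) : X -> X -> R :=
  match n with
  | 0%N => fun x y => if x == y then 1 else 0
  | n'.+1 => fun x y => \sum_(z : X) kpow P n' x z * P z y
  end.

Definition is_prob_mass (mu : X -> R) : Prop :=
  (forall x, 0 <= mu x) /\ \sum_(x : X) mu x = 1.

Definition is_positive_prob_mass (mu : X -> R) : Prop :=
  (forall x, 0 < mu x) /\ \sum_(x : X) mu x = 1.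

Definition is_transition_matrix (P : X -> X -> R) : Prop :=
  (forall x y, 0 <= P x y) /\ (forall x, \sum_(y : X) P x y = 1).

Definition lazy_chain (P : X -> X -> R) : Prop := forall x, 1 / 2 <= P x x.

Definition reversible (mu : X -> R) (P : X -> X -> R) : Prop :=
  forall x y, mu x * P x y = mu y * P y x.

Definition irreducible (P : X -> X -> R) : Prop :=
  forall x y, exists n, 0 < kpow P n x y.

Definition aperiodic (P : X -> X -> R) : Prop :=
  forall x (d : nat), (forall t, (0 < t)%N -> 0 < kpow P t x x -> (d %| t)%N) -> d = 1%N.

Definition ergodic (P : X -> X -> R) : Prop := irreducible P /\ aperiodic P.

Definition expect (mu : X -> R) (f : X -> R) : R := \sum_(x : X) mu x * f x.

Definition variance (mu : X -> R) (f : X -> R) : R :=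
  \sum_(x : X) mu x * (f x - expect mu f) ^+ 2.

Definition dirichlet (mu : X -> R) (Q : X -> X -> R) (f : X -> R) : R :=
  (1 / 2) * \sum_(x : X) \sum_(y : X) mu x * Q x y * (f x - f y) ^+ 2.

Definition spectral_gap (mu : X -> R) (Q : X -> X -> R) : R :=
  inf [set dirichlet mu Q f / variance mu f | f in [set f : X -> R | variance mu f != 0]].

Definition t_rel (mu : X -> R) (Q : X -> X -> R) : R := (spectral_gap mu Q)^-1.
End Defs.

Definition prodsp (d : nat) (T : 'I_d -> finType) : finType :=
  {dffun forall j : 'I_d, T j}.

Section Marginals.
Variable R : realType.
Variables (d : nat) (T : 'I_d -> finType).
Local Notation X := (prodsp T).

Definition agree (S : {set 'I_d}) (x z : X) : bool := [forall j in S, x j == z j].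

(* Since X is in bijection with X^(S) x X^(-S) via x |-> (x^(S), x^(-S)),
   functions of x^(S) are represented as functions on X depending only on
   the coordinates in S. *)
Definition marg (S : {set 'I_d}) (pi : X -> R) : X -> R :=
  fun x => \sum_(z : X | agree S x z) pi z.

Definition margP (S : {set 'I_d}) (pi : X -> R) (P : X -> X -> R) : X -> X -> R :=
  fun x y => (\sum_(x' : X | agree S x x') \sum_(y' : X | agree S y y') pi x' * P x' y')
             / marg S pi x.

Definition tens_dist (S : {set 'I_d}) (pi : X -> R) : X -> R :=
  fun x => marg S pi x * marg (~: S) pi x.

Definition tens_chain (S : {set 'I_d}) (pi : X -> R) (P : X -> X -> R) : X -> X -> R :=
  fun x y => margP S pi P x y * margP (~: S) pi P x y.
End Marginals.

(* Split [X] as [X^(S) * X^(-S)]. A function of [x^(S)] alone has the same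
   variance and Dirichlet form under [(pi, P)] as under the lumped chain
   [(pi^(S), P^(S))], so every Poincare inequality [gam * Var <= E] of [P] holds
   for [P^(S)] and [P^(-S)]. For a product of reversible chains [P1 (x) P2] with
   [P1] lazy, conditioning on the second coordinate splits the variance (law of
   total variance), and the product Dirichlet form dominates the averaged
   Dirichlet forms of [P1] on the fibres plus that of [P2] on the fibre means:
   the defect is a [P2]-Dirichlet form of the fibres measured by
   [<u, P1 u> - (E u)^2], which is nonnegative because a lazy kernel is positive
   semidefinite. Irreducibility gives
   [gamma(P) > 0] by chaining edge bounds along paths, so inverting yields the
   relaxation times; on a one-point space both gaps are [inf set0 = 0]. *)

From HB Require Import structures.
From mathcomp Require Import all_boot all_order all_algebra.
From mathcomp Require Import boolp classical_sets reals.
From mathcomp Require Import ring lra.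
Import Order.TTheory GRing.Theory Num.Theory.
Set Implicit Arguments. Unset Strict Implicit. Unset Printing Implicit Defensive.
Local Open Scope ring_scope.

Lemma ler_sum_term (R : numDomainType) (I : finType) (F : I -> R) i :
  (forall j, 0 <= F j) -> F i <= \sum_j F j.
Proof. by move=> F_ge0; rewrite (bigD1 i) //= lerDl sumr_ge0. Qed.

Section QuadraticForm.
Variables (R : realType) (Y : finType) (mu : Y -> R) (Q : Y -> Y -> R).
Hypothesis mu_ge0 : forall y, 0 <= mu y.
Hypothesis Q_ge0 : forall y y', 0 <= Q y y'.
Hypothesis Q_sum : forall y, \sum_y' Q y y' = 1.
Hypothesis Q_rev : reversible mu Q.

Definition qform (u v : Y -> R) : R :=
  \sum_y \sum_y' mu y * Q y y' * u y * v y'.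

Lemma sum_flow_l (F : Y -> R) :
  \sum_y \sum_y' mu y * Q y y' * F y = \sum_y mu y * F y.
Proof. by apply: eq_bigr => y _; rewrite -big_distrl -big_distrr /= Q_sum mulr1. Qed.

Lemma sum_flow_swap (F : Y -> Y -> R) :
  \sum_y \sum_y' mu y * Q y y' * F y y' = \sum_y \sum_y' mu y * Q y y' * F y' y.
Proof.
by rewrite exchange_big; apply: eq_bigr => y _; apply: eq_bigr => y' _; rewrite Q_rev.
Qed.

Lemma sum_flow_r (F : Y -> R) :
  \sum_y \sum_y' mu y * Q y y' * F y' = \sum_y mu y * F y.
Proof. by rewrite (sum_flow_swap (fun _ y' => F y')) sum_flow_l. Qed.

Lemma reversible_polarization (G : Y -> Y -> R) :
  \sum_y mu y * G y y - \sum_y \sum_y' mu y * Q y y' * G y y' =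
  1 / 2 * \sum_y \sum_y' mu y * Q y y' * (G y y + G y' y' - G y y' - G y' y).
Proof.
have -> : \sum_y \sum_y' mu y * Q y y' * (G y y + G y' y' - G y y' - G y' y) =
    \sum_y \sum_y' mu y * Q y y' * G y y + \sum_y \sum_y' mu y * Q y y' * G y' y'
    - \sum_y \sum_y' mu y * Q y y' * G y y' - \sum_y \sum_y' mu y * Q y y' * G y' y.
  rewrite -big_split -!sumrB /=; apply: eq_bigr => y _.
  by rewrite -big_split -!sumrB /=; apply: eq_bigr => y' _; ring.
rewrite sum_flow_r (sum_flow_l (fun y => G y y)) (sum_flow_swap (fun y y' => G y' y)).
lra.
Qed.

Lemma dirichlet_qform f :
  dirichlet mu Q f = \sum_y mu y * f y ^+ 2 - qform f f.
Proof.
have -> : qform f f = \sum_y \sum_y' mu y * Q y y' * (f y * f y').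
  by apply: eq_bigr => y _; apply: eq_bigr => y' _; rewrite mulrA.
have -> : \sum_y mu y * f y ^+ 2 = \sum_y mu y * (f y * f y).
  by apply: eq_bigr => y _; rewrite expr2.
rewrite (reversible_polarization (fun y y' => f y * f y')); congr (_ * _).
by apply: eq_bigr => y _; apply: eq_bigr => y' _; congr (_ * _); ring.
Qed.

Lemma qform_subr (u v : Y -> R) :
  qform (fun y => u y - v y) (fun y => u y - v y) =
  qform u u + qform v v - qform u v - qform v u.
Proof.
rewrite /qform -big_split -!sumrB /=; apply: eq_bigr => y _.
by rewrite -big_split -!sumrB /=; apply: eq_bigr => y' _; ring.
Qed.

(* Laziness: the diagonal terms of [sum mu Q (u y + u y')^2] alone already
   exceed [2 sum mu u^2], while the whole sum is [2 sum mu u^2 + 2 qform u u]. *)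
Lemma lazy_qform_ge0 (Q_lazy : lazy_chain Q) u : 0 <= qform u u.
Proof.
have sum_sqrD : \sum_y \sum_y' mu y * Q y y' * (u y + u y') ^+ 2 =
    2 * \sum_y mu y * u y ^+ 2 + 2 * qform u u.
  have -> : \sum_y \sum_y' mu y * Q y y' * (u y + u y') ^+ 2 =
      \sum_y \sum_y' mu y * Q y y' * u y ^+ 2
      + \sum_y \sum_y' mu y * Q y y' * u y' ^+ 2
      + 2 * \sum_y \sum_y' mu y * Q y y' * u y * u y'.
    rewrite mulr_sumr -!big_split /=; apply: eq_bigr => y _.
    by rewrite mulr_sumr -!big_split /=; apply: eq_bigr => y' _; ring.
  by rewrite sum_flow_r (sum_flow_l (fun y => u y ^+ 2)) /qform; ring.
have diag_le : 2 * \sum_y mu y * u y ^+ 2 <=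
    \sum_y \sum_y' mu y * Q y y' * (u y + u y') ^+ 2.
  rewrite mulr_sumr; apply: ler_sum => y _.
  apply: le_trans (ler_sum_term _ _); last first.
    by move=> y'; rewrite mulr_ge0 ?sqr_ge0 ?mulr_ge0.
  have : 0 <= mu y * u y ^+ 2 * (Q y y - 1 / 2).
    apply: mulr_ge0; first by rewrite mulr_ge0 ?sqr_ge0.
    by rewrite subr_ge0 Q_lazy.
  nra.
lra.
Qed.

Lemma sqr_expect_le_qform (Q_lazy : lazy_chain Q) (mu_sum : \sum_y mu y = 1) u :
  expect mu u ^+ 2 <= qform u u.
Proof.
set c := expect mu u.
have centered : qform (fun y => u y - c) (fun y => u y - c) = qform u u - c ^+ 2.
  have flow1 : \sum_y \sum_y' mu y * Q y y' = 1.
    by rewrite -mu_sum; apply: eq_bigr => y _; rewrite -mulr_sumr Q_sum mulr1.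
  have -> : qform (fun y => u y - c) (fun y => u y - c) =
      qform u u - c * \sum_y \sum_y' mu y * Q y y' * u y
      - c * \sum_y \sum_y' mu y * Q y y' * u y'
      + c ^+ 2 * \sum_y \sum_y' mu y * Q y y'.
    rewrite /qform !mulr_sumr -!sumrB -big_split /=; apply: eq_bigr => y _.
    by rewrite !mulr_sumr -!sumrB -big_split /=; apply: eq_bigr => y' _; ring.
  by rewrite sum_flow_l sum_flow_r flow1 -/(expect mu u) -/c; ring.
by rewrite -subr_ge0 -centered lazy_qform_ge0.
Qed.
End QuadraticForm.

Section Variance.
Variables (R : realType) (Y : finType) (mu : Y -> R).

Lemma variance_ge0 (mu_ge0 : forall y, 0 <= mu y) f : 0 <= variance mu f.
Proof. by apply: sumr_ge0 => y _; rewrite mulr_ge0 ?sqr_ge0. Qed.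

Lemma dirichlet_ge0 (mu_ge0 : forall y, 0 <= mu y) Q
    (Q_ge0 : forall y y', 0 <= Q y y') f :
  0 <= dirichlet mu Q f.
Proof.
rewrite mulr_ge0 ?divr_ge0 ?ler01 ?ler0n //.
by apply: sumr_ge0 => y _; apply: sumr_ge0 => y' _; rewrite mulr_ge0 ?sqr_ge0 ?mulr_ge0.
Qed.

Hypothesis mu_sum : \sum_y mu y = 1.

Lemma sum_sqr_sub_expect f c :
  \sum_y mu y * (f y - c) ^+ 2 = variance mu f + (expect mu f - c) ^+ 2.
Proof.
set m := expect mu f.
have centered : \sum_y mu y * (f y - m) = 0.
  rewrite (eq_bigr (fun y => mu y * f y - m * mu y)); last by move=> y _; ring.
  by rewrite sumrB -mulr_sumr mu_sum mulr1 subrr.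
have -> : \sum_y mu y * (f y - c) ^+ 2 =
    \sum_y mu y * (f y - m) ^+ 2 + 2 * (m - c) * \sum_y mu y * (f y - m)
    + (m - c) ^+ 2 * \sum_y mu y.
  by rewrite !mulr_sumr -!big_split /=; apply: eq_bigr => y _; ring.
by rewrite centered mu_sum /variance -/m; ring.
Qed.

Lemma variance_subsingleton (Y_sub : forall x y : Y, x = y) f : variance mu f = 0.
Proof.
apply: big1 => x _; suff -> : expect mu f = f x by rewrite subrr expr0n mulr0.
rewrite /expect (eq_bigr (fun y => mu y * f x)) -?mulr_suml ?mu_sum ?mul1r //.
by move=> y _; rewrite (Y_sub y x).
Qed.
End Variance.

Lemma exists_variance_neq0 (R : realType) (Y : finType) (mu : Y -> R) (x y : Y) :
  (forall y, 0 < mu y) -> x != y -> exists f, variance mu f != 0.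
Proof.
move=> mu_gt0; rewrite eq_sym => yx; exists (fun z : Y => (z == x)%:R); apply/negP.
rewrite psumr_eq0 => [/allP zero|z _]; last by rewrite mulr_ge0 ?sqr_ge0 ?ltW.
have := zero x (mem_index_enum x); have := zero y (mem_index_enum y).
rewrite /= (negbTE yx) eqxx (mulf_eq0 (mu y)) (mulf_eq0 (mu x)).
rewrite (gt_eqF (mu_gt0 y)) (gt_eqF (mu_gt0 x)) /= !sqrf_eq0.
rewrite !subr_eq0 => /eqP <- /eqP; exact/eqP/oner_neq0.
Qed.

Section SpectralGap.
Local Open Scope classical_set_scope.
Variables (R : realType) (Y : finType) (mu : Y -> R) (Q : Y -> Y -> R).

Lemma spectral_gap_subsingleton :
  \sum_y mu y = 1 -> (forall x y : Y, x = y) -> spectral_gap mu Q = 0.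
Proof.
move=> mu_sum Y_sub; rewrite /spectral_gap.
suff -> : [set dirichlet mu Q f / variance mu f | f in [set f | variance mu f != 0]] = set0.
  exact: inf0.
by apply/seteqP; split => // r [f]; rewrite /= variance_subsingleton ?eqxx.
Qed.

Hypothesis mu_ge0 : forall y, 0 <= mu y.
Hypothesis Q_ge0 : forall y y', 0 <= Q y y'.

Lemma spectral_gap_poincare f :
  spectral_gap mu Q * variance mu f <= dirichlet mu Q f.
Proof.
have [->|var_neq0] := eqVneq (variance mu f) 0; first by rewrite mulr0 dirichlet_ge0.
have var_gt0 : 0 < variance mu f by rewrite lt_def var_neq0 variance_ge0.
rewrite -ler_pdivlMr //; apply: ge_inf; last by exists f.
by exists 0 => _ [g _ <-]; rewrite divr_ge0 ?dirichlet_ge0 ?variance_ge0.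
Qed.

Lemma spectral_gap_ge c : (exists f, variance mu f != 0) ->
  (forall f, c * variance mu f <= dirichlet mu Q f) -> c <= spectral_gap mu Q.
Proof.
move=> [f var_neq0] poincare; apply: lb_le_inf.
  by exists (dirichlet mu Q f / variance mu f), f.
move=> _ [g var_neq0' <-].
by rewrite ler_pdivlMr // lt_def var_neq0' variance_ge0.
Qed.
End SpectralGap.

Section PositiveGap.
Variables (R : realType) (Y : finType) (mu : Y -> R) (Q : Y -> Y -> R).
Hypothesis mu_gt0 : forall y, 0 < mu y.
Hypothesis Q_ge0 : forall y y', 0 <= Q y y'.

Let mu_ge0 y : 0 <= mu y := ltW (mu_gt0 y).
Let dir_ge0 g : 0 <= dirichlet mu Q g := dirichlet_ge0 mu_ge0 Q_ge0 g.

Lemma sqr_sub_le_dirichlet x y g :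
  mu x * Q x y * (g x - g y) ^+ 2 <= 2 * dirichlet mu Q g.
Proof.
have term_ge0 x' y' : 0 <= mu x' * Q x' y' * (g x' - g y') ^+ 2.
  by rewrite mulr_ge0 ?sqr_ge0 ?mulr_ge0 ?mu_ge0.
rewrite /dirichlet [2 * _]mulrA div1r mulfV ?pnatr_eq0 // mul1r.
apply: le_trans (ler_sum_term (F := fun y' => _ * (g x - g y') ^+ 2) y (term_ge0 x)) _.
by apply: (ler_sum_term (F := fun x' => \sum_y' _)) => x'; apply: sumr_ge0.
Qed.

Lemma kpow_sqr_sub_le n x y : 0 < kpow Q n x y ->
  exists2 C, 0 <= C & forall g, (g x - g y) ^+ 2 <= C * dirichlet mu Q g.
Proof.
elim: n y => [|n IH] y /=.
  case: eqP => [<- _|_]; last by rewrite ltxx.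
  by exists 0 => // g; rewrite subrr expr0n mul0r.
move=> path_gt0.
have [z step_gt0] : exists z, 0 < kpow Q n x z * Q z y.
  apply/existsP; apply: contraTT path_gt0; rewrite negb_exists => /forallP none.
  by rewrite -leNgt; apply: sumr_le0 => z _; rewrite leNgt none.
have kz_gt0 : 0 < kpow Q n x z by have := Q_ge0 z y; nra.
have Qzy_gt0 : 0 < Q z y by have := Q_ge0 z y; nra.
have [C C_ge0 HC] := IH z kz_gt0.
set c := mu z * Q z y; have c_gt0 : 0 < c by rewrite mulr_gt0.
exists (2 * C + 4 * c^-1) => [|g]; first by rewrite addr_ge0 ?mulr_ge0 // invr_ge0 ltW.
have last_step : (g z - g y) ^+ 2 <= 2 * c^-1 * dirichlet mu Q g.
  by rewrite -mulrA mulrCA ler_pdivlMl // sqr_sub_le_dirichlet.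
have := HC g; have := sqr_ge0 (g x - g z - (g z - g y)); nra.
Qed.

Lemma irreducible_sqr_sub_le : irreducible Q ->
  exists2 C, 0 <= C & forall x y g, (g x - g y) ^+ 2 <= C * dirichlet mu Q g.
Proof.
move=> Q_irr.
have /fin_all_exists [C HC] : forall xy : Y * Y, exists C : R,
    0 <= C /\ forall g, (g xy.1 - g xy.2) ^+ 2 <= C * dirichlet mu Q g.
  move=> [x y]; have [n /kpow_sqr_sub_le [C C_ge0 HC]] := Q_irr x y.
  by exists C.
exists (\sum_xy C xy) => [|x y g]; first by apply: sumr_ge0 => xy _; case: (HC xy).
apply: le_trans (proj2 (HC (x, y)) g) _; rewrite ler_wpM2r //.
by apply: ler_sum_term => xy; case: (HC xy).
Qed.

Lemma spectral_gap_gt0 (x y : Y) : x != y -> \sum_y mu y = 1 -> irreducible Q ->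
  0 < spectral_gap mu Q.
Proof.
move=> xy mu_sum /irreducible_sqr_sub_le [C C_ge0 HC].
have C1_gt0 : 0 < C + 1 by rewrite ltr_wpDl.
have inv_gt0 : 0 < (C + 1)^-1 by rewrite invr_gt0.
apply: lt_le_trans inv_gt0 _; apply: spectral_gap_ge => //.
  exact: exists_variance_neq0 xy.
move=> g; rewrite ler_pdivrMl //.
have var_le : variance mu g <= C * dirichlet mu Q g.
  apply: le_trans (_ : _ <= \sum_z mu z * (g z - g x) ^+ 2) _.
    by rewrite (sum_sqr_sub_expect mu_sum) lerDl sqr_ge0.
  rewrite -[C * _]mul1r -mu_sum mulr_suml; apply: ler_sum => z _.
  by rewrite ler_wpM2l.
by have := dir_ge0 g; nra.
Qed.
End PositiveGap.

Section Transport.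
Variables (R : realType) (Y X : finType) (e : Y -> X).
Hypothesis e_bij : bijective e.
Implicit Types (mu f : X -> R) (Q : X -> X -> R).

Lemma sum_bij (F : X -> R) : \sum_x F x = \sum_y F (e y).
Proof. exact: (reindex e (onW_bij _ e_bij)). Qed.

Lemma variance_comp mu f : variance (mu \o e) (f \o e) = variance mu f.
Proof.
have E : expect (mu \o e) (f \o e) = expect mu f by rewrite /expect [RHS]sum_bij.
by rewrite /variance E [RHS]sum_bij.
Qed.

Lemma dirichlet_comp mu Q f :
  dirichlet (mu \o e) (fun y y' => Q (e y) (e y')) (f \o e) = dirichlet mu Q f.
Proof.
rewrite /dirichlet [in RHS]sum_bij; congr (_ * _); apply: eq_bigr => y _.
by rewrite [RHS]sum_bij.
Qed.

Lemma poincare_comp gam mu Q :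
  (forall g, gam * variance (mu \o e) g <=
               dirichlet (mu \o e) (fun y y' => Q (e y) (e y')) g) ->
  forall f, gam * variance mu f <= dirichlet mu Q f.
Proof. by move=> poincare f; rewrite -variance_comp -dirichlet_comp. Qed.
End Transport.

Section Lumping.
Variables (R : realType) (Y A : finType) (proj : Y -> A).
Variables (p : Y -> R) (K : Y -> Y -> R).

Definition lump_mass (a : A) : R := \sum_(y | proj y == a) p y.

Definition lump_flow (a a' : A) : R :=
  \sum_(y | proj y == a) \sum_(y' | proj y' == a') p y * K y y'.

Definition lump_kernel (a a' : A) : R := lump_flow a a' / lump_mass a.

Lemma sum_fibers (F : Y -> R) : \sum_y F y = \sum_a \sum_(y | proj y == a) F y.
Proof. exact: partition_big. Qed.

Lemma sum_fibers2 (F : Y -> Y -> R) :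
  \sum_y \sum_y' F y y' =
  \sum_a \sum_a' \sum_(y | proj y == a) \sum_(y' | proj y' == a') F y y'.
Proof.
rewrite sum_fibers; apply: eq_bigr => a _.
by under eq_bigr => y _ do rewrite sum_fibers; rewrite exchange_big.
Qed.

Lemma sum_lump_mass (F : A -> R) :
  \sum_a lump_mass a * F a = \sum_y p y * F (proj y).
Proof.
rewrite [RHS]sum_fibers; apply: eq_bigr => a _; rewrite mulr_suml.
by apply: eq_bigr => y /eqP ->.
Qed.

Lemma variance_lump h : variance lump_mass h = variance p (h \o proj).
Proof.
have E : expect lump_mass h = expect p (h \o proj) by exact: sum_lump_mass.
by rewrite /variance E; exact: sum_lump_mass.
Qed.

Hypothesis proj_surj : forall a, exists y, proj y = a.
Hypothesis p_gt0 : forall y, 0 < p y.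

Lemma lump_mass_gt0 a : 0 < lump_mass a.
Proof.
have [y <-] := proj_surj a.
by rewrite /lump_mass (bigD1 y) //= ltr_wpDr // sumr_ge0 // => z _; apply: ltW.
Qed.

Lemma lump_mass_prob : \sum_y p y = 1 -> is_positive_prob_mass lump_mass.
Proof. by move=> p_sum; split; [exact: lump_mass_gt0 | rewrite -sum_fibers]. Qed.

Lemma lump_massK a a' : lump_mass a * lump_kernel a a' = lump_flow a a'.
Proof. by rewrite mulrC divfK // gt_eqF // lump_mass_gt0. Qed.

Lemma dirichlet_lump h :
  dirichlet lump_mass lump_kernel h = dirichlet p K (h \o proj).
Proof.
rewrite /dirichlet sum_fibers2; congr (_ * _); apply: eq_bigr => a _.
apply: eq_bigr => a' _; rewrite lump_massK mulr_suml; apply: eq_bigr => y /eqP <-.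
by rewrite mulr_suml; apply: eq_bigr => y' /eqP <-.
Qed.

Lemma lump_poincare gam :
  (forall g, gam * variance p g <= dirichlet p K g) ->
  forall h, gam * variance lump_mass h <= dirichlet lump_mass lump_kernel h.
Proof. by move=> poincare h; rewrite variance_lump dirichlet_lump. Qed.

Hypothesis K_ge0 : forall y y', 0 <= K y y'.
Hypothesis K_sum : forall y, \sum_y' K y y' = 1.

Let flow_ge0 y y' : 0 <= p y * K y y' := mulr_ge0 (ltW (p_gt0 y)) (K_ge0 y y').

Lemma lump_kernel_transition : is_transition_matrix lump_kernel.
Proof.
split=> [a a'|a].
  apply: divr_ge0; last exact/ltW/lump_mass_gt0.
  by apply: sumr_ge0 => y _; apply: sumr_ge0 => y' _; exact: flow_ge0.
rewrite -mulr_suml (_ : \sum_a' lump_flow a a' = lump_mass a).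
  by rewrite divff // gt_eqF // lump_mass_gt0.
rewrite /lump_flow exchange_big /=; apply: eq_bigr => y _.
by rewrite -sum_fibers -mulr_sumr K_sum mulr1.
Qed.

Lemma lump_kernel_lazy : lazy_chain K -> lazy_chain lump_kernel.
Proof.
move=> K_lazy a; rewrite ler_pdivlMr ?lump_mass_gt0 // mulrC.
rewrite /lump_mass /lump_flow mulr_suml; apply: ler_sum => y ya.
rewrite (bigD1 y) //= -[X in X <= _]addr0 lerD //; last first.
  by apply: sumr_ge0 => y' _; exact: flow_ge0.
by rewrite ler_wpM2l ?K_lazy // ltW.
Qed.

Lemma lump_kernel_reversible : reversible p K -> reversible lump_mass lump_kernel.
Proof.
move=> K_rev a a'; rewrite !lump_massK /lump_flow exchange_big /=.
by apply: eq_bigr => y' _; apply: eq_bigr => y _; rewrite K_rev.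
Qed.
End Lumping.

Section Product.
Variables (R : realType) (A B : finType).
Variables (mu1 : A -> R) (P1 : A -> A -> R) (mu2 : B -> R) (P2 : B -> B -> R).

Definition prod_mass (q : A * B) : R := mu1 q.1 * mu2 q.2.
Definition prod_kernel (q q' : A * B) : R := P1 q.1 q'.1 * P2 q.2 q'.2.

Lemma sum_pair (F : A * B -> R) : \sum_q F q = \sum_b \sum_a F (a, b).
Proof.
rewrite exchange_big (pair_bigA _ (fun a b => F (a, b))) /=.
by apply: eq_bigr => -[].
Qed.

Lemma prod_mass_sum : \sum_q prod_mass q = (\sum_a mu1 a) * (\sum_b mu2 b).
Proof.
rewrite sum_pair mulrC mulr_suml; apply: eq_bigr => b _.
by rewrite mulr_sumr; apply: eq_bigr => a _; rewrite mulrC.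
Qed.

Hypothesis mu1_ge0 : forall a, 0 <= mu1 a.
Hypothesis mu1_sum : \sum_a mu1 a = 1.
Hypothesis P1_ge0 : forall a a', 0 <= P1 a a'.
Hypothesis P1_sum : forall a, \sum_a' P1 a a' = 1.
Hypothesis P1_rev : reversible mu1 P1.
Hypothesis P1_lazy : lazy_chain P1.
Hypothesis mu2_ge0 : forall b, 0 <= mu2 b.
Hypothesis P2_ge0 : forall b b', 0 <= P2 b b'.
Hypothesis P2_sum : forall b, \sum_b' P2 b b' = 1.
Hypothesis P2_rev : reversible mu2 P2.

Lemma prod_kernel_sum q : \sum_q' prod_kernel q q' = 1.
Proof.
rewrite sum_pair -[RHS](P2_sum q.2); apply: eq_bigr => b _.
by rewrite -[RHS]mul1r -(P1_sum q.1) mulr_suml.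
Qed.

Lemma prod_kernel_reversible : reversible prod_mass prod_kernel.
Proof.
move=> [a b] [a' b']; rewrite /prod_mass /prod_kernel /=.
by rewrite mulrACA P1_rev P2_rev -mulrACA.
Qed.

Section Fibers.
Variable f : A * B -> R.
Local Notation fib b := (fun a => f (a, b)).
Local Notation mean b := (expect mu1 (fib b)).

Lemma variance_prod :
  variance prod_mass f = \sum_b mu2 b * variance mu1 (fib b) + variance mu2 (fun b => mean b).
Proof.
have E : expect prod_mass f = expect mu2 (fun b => mean b).
  rewrite /expect sum_pair; apply: eq_bigr => b _; rewrite mulr_sumr.
  by apply: eq_bigr => a _; rewrite /prod_mass /=; ring.
rewrite /variance E sum_pair -big_split /=; apply: eq_bigr => b _.
rewrite -mulrDr -(sum_sqr_sub_expect mu1_sum) mulr_sumr.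
by apply: eq_bigr => a _; rewrite /prod_mass /=; ring.
Qed.

Lemma qform_prod : qform prod_mass prod_kernel f f =
  \sum_b \sum_b' mu2 b * P2 b b' * qform mu1 P1 (fib b) (fib b').
Proof.
rewrite /qform sum_pair; apply: eq_bigr => b _.
under eq_bigr => a _ do rewrite sum_pair.
rewrite exchange_big; apply: eq_bigr => b' _; rewrite mulr_sumr; apply: eq_bigr => a _.
rewrite mulr_sumr; apply: eq_bigr => a' _.
by rewrite /prod_mass /prod_kernel /=; ring.
Qed.

(* [fiber_cov b b'] is [<f_b - E f_b, P1 (f_b' - E f_b')>] in [L^2(mu1)]. *)
Definition fiber_cov (b b' : B) : R := qform mu1 P1 (fib b) (fib b') - mean b * mean b'.

Lemma dirichlet_prod_defect :
  dirichlet prod_mass prod_kernel f -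
    (\sum_b mu2 b * dirichlet mu1 P1 (fib b) + dirichlet mu2 P2 (fun b => mean b)) =
  \sum_b mu2 b * fiber_cov b b - \sum_b \sum_b' mu2 b * P2 b b' * fiber_cov b b'.
Proof.
have mass_sqr : \sum_q prod_mass q * f q ^+ 2 =
    \sum_b mu2 b * \sum_a mu1 a * f (a, b) ^+ 2.
  rewrite sum_pair; apply: eq_bigr => b _; rewrite mulr_sumr; apply: eq_bigr => a _.
  by rewrite /prod_mass /=; ring.
have cov_diag : \sum_b mu2 b * fiber_cov b b =
    \sum_b mu2 b * qform mu1 P1 (fib b) (fib b) - \sum_b mu2 b * mean b ^+ 2.
  by rewrite -sumrB; apply: eq_bigr => b _; rewrite /fiber_cov; ring.
have cov_flow : \sum_b \sum_b' mu2 b * P2 b b' * fiber_cov b b' =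
    \sum_b \sum_b' mu2 b * P2 b b' * qform mu1 P1 (fib b) (fib b') -
    qform mu2 P2 (fun b => mean b) (fun b => mean b).
  rewrite /fiber_cov /qform -sumrB; apply: eq_bigr => b _.
  by rewrite -sumrB; apply: eq_bigr => b' _; ring.
under eq_bigr => b _ do rewrite (dirichlet_qform P1_sum P1_rev) mulrBr.
rewrite (dirichlet_qform prod_kernel_sum prod_kernel_reversible).
rewrite (dirichlet_qform P2_sum P2_rev) sumrB mass_sqr qform_prod cov_diag cov_flow.
ring.
Qed.

Lemma fiber_cov_polar_ge0 b b' :
  0 <= fiber_cov b b + fiber_cov b' b' - fiber_cov b b' - fiber_cov b' b.
Proof.
pose u a := f (a, b) - f (a, b').
have mean_u : expect mu1 u = mean b - mean b'.
  by rewrite /expect -sumrB; apply: eq_bigr => a _; rewrite mulrBr.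
have -> : fiber_cov b b + fiber_cov b' b' - fiber_cov b b' - fiber_cov b' b =
    qform mu1 P1 u u - expect mu1 u ^+ 2.
  by rewrite qform_subr mean_u /fiber_cov; ring.
by rewrite subr_ge0 sqr_expect_le_qform.
Qed.

Lemma dirichlet_prod_ge :
  \sum_b mu2 b * dirichlet mu1 P1 (fib b) + dirichlet mu2 P2 (fun b => mean b) <=
  dirichlet prod_mass prod_kernel f.
Proof.
rewrite -subr_ge0 dirichlet_prod_defect reversible_polarization //.
rewrite mulr_ge0 ?divr_ge0 ?ler01 ?ler0n //.
apply: sumr_ge0 => b _; apply: sumr_ge0 => b' _.
by rewrite mulr_ge0 ?mulr_ge0 ?fiber_cov_polar_ge0.
Qed.
End Fibers.

Lemma prod_poincare gam :
  (forall h, gam * variance mu1 h <= dirichlet mu1 P1 h) ->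
  (forall h, gam * variance mu2 h <= dirichlet mu2 P2 h) ->
  forall f, gam * variance prod_mass f <= dirichlet prod_mass prod_kernel f.
Proof.
move=> poincare1 poincare2 f; apply: le_trans (dirichlet_prod_ge f).
rewrite variance_prod mulrDr lerD // mulr_sumr ler_sum // => b _.
by rewrite mulrCA ler_wpM2l.
Qed.
End Product.

Section CoordinateSplit.
Variables (R : realType) (d : nat) (T : 'I_d -> finType) (S : {set 'I_d}).
Local Notation X := (prodsp T).
Variable x0 : X.

Definition merge (x z : X) : X := [ffun j => if j \in S then x j else z j].

Lemma mergeE x z j : merge x z j = if j \in S then x j else z j.
Proof. exact: ffunE. Qed.

(* [X^(S)] and [X^(-S)] are realised as the points of [X] that agree with [x0]
   off [S], resp. on [S]. *)
Definition coordS := {x : X | merge x x0 == x}.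
Definition coordSc := {x : X | merge x0 x == x}.

Lemma merge_coordS x : merge (merge x x0) x0 == merge x x0.
Proof. by apply/eqP; apply/ffunP => j; rewrite !mergeE; case: (j \in S). Qed.

Lemma merge_coordSc x : merge x0 (merge x0 x) == merge x0 x.
Proof. by apply/eqP; apply/ffunP => j; rewrite !mergeE; case: (j \in S). Qed.

Definition projS (x : X) : coordS := exist _ (merge x x0) (merge_coordS x).
Definition projSc (x : X) : coordSc := exist _ (merge x0 x) (merge_coordSc x).

Lemma projS_surj a : exists x, projS x = a.
Proof. by exists (val a); apply: val_inj; exact/eqP/(valP a). Qed.

Lemma projSc_surj b : exists x, projSc x = b.
Proof. by exists (val b); apply: val_inj; exact/eqP/(valP b). Qed.

Lemma agree_projS x z : agree S x z = (projS z == projS x).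
Proof.
apply/forallP/eqP => [agr | /(congr1 val) /= /ffunP eq_merge j].
  apply: val_inj; apply/ffunP => j /=; rewrite !mergeE; case: ifP => // jS.
  by have := agr j; rewrite jS => /eqP.
by apply/implyP => jS; have := eq_merge j; rewrite !mergeE jS => ->.
Qed.

Lemma agree_projSc x z : agree (~: S) x z = (projSc z == projSc x).
Proof.
apply/forallP/eqP => [agr | /(congr1 val) /= /ffunP eq_merge j].
  apply: val_inj; apply/ffunP => j /=; rewrite !mergeE; case: ifP => // jS.
  by have := agr j; rewrite inE jS => /eqP.
by apply/implyP; rewrite inE => /negbTE jS; have := eq_merge j; rewrite !mergeE jS => ->.
Qed.

Definition unsplit (q : coordS * coordSc) : X := merge (val q.1) (val q.2).

Lemma projS_unsplit q : projS (unsplit q) = q.1.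
Proof.
apply: val_inj; rewrite -[RHS](eqP (valP q.1)); apply/ffunP => j /=.
by rewrite !mergeE; case: (j \in S).
Qed.

Lemma projSc_unsplit q : projSc (unsplit q) = q.2.
Proof.
apply: val_inj; rewrite -[RHS](eqP (valP q.2)); apply/ffunP => j /=.
by rewrite !mergeE; case: (j \in S).
Qed.

Lemma unsplit_bij : bijective unsplit.
Proof.
exists (fun x => (projS x, projSc x)) => [[a b]|x].
  by rewrite projS_unsplit projSc_unsplit.
by apply/ffunP => j; rewrite !mergeE; case: (j \in S).
Qed.

Variables (pi : X -> R) (P : X -> X -> R).

Lemma marg_lumpS x : marg S pi x = lump_mass projS pi (projS x).
Proof. by apply: eq_bigl => z; rewrite agree_projS. Qed.

Lemma marg_lumpSc x : marg (~: S) pi x = lump_mass projSc pi (projSc x).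
Proof. by apply: eq_bigl => z; rewrite agree_projSc. Qed.

Lemma margP_lumpS x y : margP S pi P x y = lump_kernel projS pi P (projS x) (projS y).
Proof.
rewrite /margP /lump_kernel marg_lumpS; congr (_ / _).
apply: eq_big => [x'|x' _]; first exact: agree_projS.
by apply: eq_bigl => y'; exact: agree_projS.
Qed.

Lemma margP_lumpSc x y :
  margP (~: S) pi P x y = lump_kernel projSc pi P (projSc x) (projSc y).
Proof.
rewrite /margP /lump_kernel marg_lumpSc; congr (_ / _).
apply: eq_big => [x'|x' _]; first exact: agree_projSc.
by apply: eq_bigl => y'; exact: agree_projSc.
Qed.

Local Notation massS := (lump_mass projS pi).
Local Notation massSc := (lump_mass projSc pi).
Local Notation kernS := (lump_kernel projS pi P).
Local Notation kernSc := (lump_kernel projSc pi P).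

Lemma tens_dist_unsplit : tens_dist S pi \o unsplit = prod_mass massS massSc.
Proof.
apply: funext => q.
by rewrite /= /tens_dist marg_lumpS marg_lumpSc projS_unsplit projSc_unsplit.
Qed.

Lemma tens_chain_unsplit :
  (fun q q' => tens_chain S pi P (unsplit q) (unsplit q')) = prod_kernel kernS kernSc.
Proof.
apply: funext => q; apply: funext => q'.
by rewrite /tens_chain margP_lumpS margP_lumpSc !projS_unsplit !projSc_unsplit.
Qed.

Hypothesis pi_gt0 : forall x, 0 < pi x.
Hypothesis pi_sum : \sum_x pi x = 1.

Lemma tens_dist_prob : is_positive_prob_mass (tens_dist S pi).
Proof.
have [massS_gt0 massS_sum] := lump_mass_prob projS_surj pi_gt0 pi_sum.
have [massSc_gt0 massSc_sum] := lump_mass_prob projSc_surj pi_gt0 pi_sum.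
split=> [x|]; first by rewrite /tens_dist marg_lumpS marg_lumpSc mulr_gt0.
by rewrite (sum_bij unsplit_bij) -[LHS]/(\sum_q (tens_dist S pi \o unsplit) q)
  tens_dist_unsplit prod_mass_sum massS_sum massSc_sum mulr1.
Qed.

Hypothesis P_ge0 : forall x y, 0 <= P x y.
Hypothesis P_sum : forall x, \sum_y P x y = 1.
Hypothesis P_lazy : lazy_chain P.
Hypothesis P_rev : reversible pi P.

Lemma tens_poincare gam :
  (forall g, gam * variance pi g <= dirichlet pi P g) ->
  forall f, gam * variance (tens_dist S pi) f <=
            dirichlet (tens_dist S pi) (tens_chain S pi P) f.
Proof.
move=> poincare; apply: (poincare_comp unsplit_bij).
rewrite tens_dist_unsplit tens_chain_unsplit.
have [massS_gt0 massS_sum] := lump_mass_prob projS_surj pi_gt0 pi_sum.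
have [massSc_gt0 _] := lump_mass_prob projSc_surj pi_gt0 pi_sum.
have [kernS_ge0 kernS_sum] := lump_kernel_transition projS_surj pi_gt0 P_ge0 P_sum.
have [kernSc_ge0 kernSc_sum] := lump_kernel_transition projSc_surj pi_gt0 P_ge0 P_sum.
apply: prod_poincare => //.
- by move=> a; exact: ltW (massS_gt0 a).
- exact: lump_kernel_reversible projS_surj pi_gt0 P_rev.
- exact: lump_kernel_lazy projS_surj pi_gt0 P_ge0 P_lazy.
- by move=> b; exact: ltW (massSc_gt0 b).
- exact: lump_kernel_reversible projSc_surj pi_gt0 P_rev.
- exact: (lump_poincare projS_surj pi_gt0 poincare).
- exact: (lump_poincare projSc_surj pi_gt0 poincare).
Qed.
End CoordinateSplit.

Unset Implicit Arguments.

Theorem corollary2p31 (R : realType) (d : nat) (T : 'I_d -> finType)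
  (pi : prodsp T -> R) (P : prodsp T -> prodsp T -> R) (S : {set 'I_d}) :
  is_positive_prob_mass pi ->
  S != finset.set0 ->
  is_transition_matrix P -> lazy_chain P -> ergodic P -> reversible pi P ->
  spectral_gap pi P <= spectral_gap (tens_dist S pi) (tens_chain S pi P) /\
  t_rel (tens_dist S pi) (tens_chain S pi P) <= t_rel pi P.
Proof.
move=> [pi_gt0 pi_sum] _ [P_ge0 P_sum] P_lazy [P_irr _] P_rev.
have [x0 _|X_empty] := pickP (fun _ : prodsp T => true); last first.
  by move: pi_sum; rewrite big_pred0 // => /esym/eqP; rewrite oner_eq0.
have [tens_gt0 tens_sum] := tens_dist_prob S x0 pi_gt0 pi_sum.
have [/existsP[x /existsP[y xy]] | X_nontrivial] :=
  boolP [exists x : prodsp T, exists y, x != y].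
  have gap_gt0 : 0 < spectral_gap pi P := spectral_gap_gt0 pi_gt0 P_ge0 xy pi_sum P_irr.
  have gap_le : spectral_gap pi P <= spectral_gap (tens_dist S pi) (tens_chain S pi P).
    apply: spectral_gap_ge (exists_variance_neq0 tens_gt0 xy) _ => [z|]; first exact: ltW.
    apply: tens_poincare => //.
    exact: spectral_gap_poincare (fun z => ltW (pi_gt0 z)) P_ge0.
  split=> //; rewrite /t_rel lef_pV2 ?posrE //; exact: lt_le_trans gap_le.
have X_sub (x y : prodsp T) : x = y.
  apply/eqP; apply: contraNT X_nontrivial => xy.
  by apply/existsP; exists x; apply/existsP; exists y.
by rewrite /t_rel !spectral_gap_subsingleton.
Qed.
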